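(* Let $(S,\Delta,\mathbb{P})$ be a probability space, $(U,d)$ a separable metric space, $\mathfrak{X}$ the set of $U$-valued random variables on $S$, $\mathcal{I}$ an ideal on $\mathbb{N}$ with $\mathbb{N}\notin\mathcal{I}$, and $\{X_n\}_{n\in\mathbb{N}}$ a sequence in $\mathfrak{X}$ which is $\mathcal{I}$-convergent in probability to $X_*\in\mathfrak{X}$ (i.e. $\{n:\mathbb{P}(d(X_n,X_* )>\varepsilon)>\delta\}\in\mathcal{I}$ for all $\varepsilon,\delta>0$). Then for every $r\geq 0$, $$\bar{\theta}_r(X_* )\subseteq \mathcal{I}^{\mathbb{P}}\text{-}LIM^rX_i\subseteq \bar{B}_r(X_* ),$$ where $\bar{\theta}_r(X_* )=\{Y\in\mathfrak{X}:\mathbb{P}(d(X_*,Y)\geq r)=0\}$ and $\bar{B}_r(X_* )=\{Y\in\mathfrak{X}:\rho(X_*,Y)\leq r\}$.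
   Context: The Ky Fan metric is $\rho(X,Y)=\inf\{\varepsilon>0:\mathbb{P}(d(X,Y)>\varepsilon)\leq\varepsilon\}$. An ideal on $\mathbb{N}$ is a family $\mathcal{I}\subseteq\mathcal{P}(\mathbb{N})$ with $\varnothing\in\mathcal{I}$, closed under finite unions and under subsets. A sequence $\{X_n\}$ in $\mathfrak{X}$ is rough $\mathcal{I}$-convergent in probability to $Y\in\mathfrak{X}$ with degree of roughness $r$ if $\{n\in\mathbb{N}:\mathbb{P}(d(X_n,Y)>r+\varepsilon)>\delta\}\in\mathcal{I}$ for every $\varepsilon,\delta>0$; $\mathcal{I}^{\mathbb{P}}\text{-}LIM^rX_i$ denotes the set of all such $Y$. *)

From HB Require Import structures.
From mathcomp Require Import all_boot all_order all_algebra.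
From mathcomp Require Import all_classical all_reals all_analysis.
Set Implicit Arguments. Unset Strict Implicit. Unset Printing Implicit Defensive.
Import Order.TTheory GRing.Theory Num.Theory.
Local Open Scope classical_set_scope.
Local Open Scope ring_scope.

Definition is_metric (R : realType) (U : Type) (d : U -> U -> R) : Prop :=
  [/\ (forall x y, 0 <= d x y),
      (forall x y, d x y = 0 <-> x = y),
      (forall x y, d x y = d y x) &
      (forall x y z, d x z <= d x y + d y z)].

Definition metric_open (R : realType) (U : Type) (d : U -> U -> R) (A : set U) : Prop :=
  forall x, A x -> exists2 e : R, 0 < e & [set y | d x y < e] `<=` A.

Definition metric_separable (R : realType) (U : Type) (d : U -> U -> R) : Prop :=
  exists D : set U, countable D /\
    forall x (e : R), 0 < e -> exists2 y, D y & d x y < e.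

Definition metric_borel (R : realType) (U : Type) (d : U -> U -> R) : set (set U) :=
  <<s metric_open d >>.

Definition random_var (dS : measure_display) (S : measurableType dS)
  (R : realType) (U : Type) (d : U -> U -> R) (X : S -> U) : Prop :=
  forall B, metric_borel d B -> measurable (X @^-1` B).

Definition is_ideal (I : set (set nat)) : Prop :=
  [/\ I set0,
      (forall A B, I A -> I B -> I (A `|` B)) &
      (forall A B, B `<=` A -> I A -> I B)].

Definition ky_fan (dS : measure_display) (S : measurableType dS) (R : realType)
  (P : probability S R) (U : Type) (d : U -> U -> R) (X Y : S -> U) : R :=
  inf [set e : R | 0 < e /\ (P [set s | (e < d (X s) (Y s))%R] <= e%:E)%E].

Definition I_conv_prob (dS : measure_display) (S : measurableType dS) (R : realType)
  (P : probability S R) (U : Type) (d : U -> U -> R) (I : set (set nat))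
  (Xn : nat -> S -> U) (Y : S -> U) : Prop :=
  forall eps delta : R, 0 < eps -> 0 < delta ->
    I [set n | (delta%:E < P [set s | (eps < d (Xn n s) (Y s))%R])%E].

Definition rough_I_conv_prob (dS : measure_display) (S : measurableType dS) (R : realType)
  (P : probability S R) (U : Type) (d : U -> U -> R) (I : set (set nat)) (r : R)
  (Xn : nat -> S -> U) (Y : S -> U) : Prop :=
  forall eps delta : R, 0 < eps -> 0 < delta ->
    I [set n | (delta%:E < P [set s | (r + eps < d (Xn n s) (Y s))%R])%E].

Definition rough_I_lim_set (dS : measure_display) (S : measurableType dS) (R : realType)
  (P : probability S R) (U : Type) (d : U -> U -> R) (I : set (set nat)) (r : R)
  (Xn : nat -> S -> U) : set (S -> U) :=
  [set Y | random_var d Y /\ rough_I_conv_prob P d I r Xn Y].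

Definition theta_bar (dS : measure_display) (S : measurableType dS) (R : realType)
  (P : probability S R) (U : Type) (d : U -> U -> R) (r : R) (X : S -> U) : set (S -> U) :=
  [set Y | random_var d Y /\ P [set s | r <= d (X s) (Y s)] = 0%E].

Definition ky_fan_closed_ball (dS : measure_display) (S : measurableType dS) (R : realType)
  (P : probability S R) (U : Type) (d : U -> U -> R) (r : R) (X : S -> U) : set (S -> U) :=
  [set Y | random_var d Y /\ ky_fan P d X Y <= r].

From HB Require Import structures.
From mathcomp Require Import all_boot all_order all_algebra.
From mathcomp Require Import all_classical all_reals all_analysis.
From mathcomp Require Import lra.
Set Implicit Arguments. Unset Strict Implicit. Unset Printing Implicit Defensive.
Import Order.TTheory GRing.Theory Num.Theory.
Local Open Scope classical_set_scope.
Local Open Scope ring_scope.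

(* Both inclusions come from the triangle inequality for d, transported to
   probabilities by subadditivity:
   P(d(X_n,Y) > r + e) <= P(d(X_n,X_* ) > e) + P(d(X_*,Y) > r),
   P(d(X_*,Y) > e) <= P(d(X_*,X_n) > (e-r)/2) + P(d(X_n,Y) > r + (e-r)/2).
   In the first, the last term vanishes for Y in theta_r(X_* ); in the second,
   since N is not in the ideal, some n makes both terms at most e/2, so every
   e > r is admissible in the infimum defining rho(X_*,Y).  Separability is
   what makes the events {d(X,Y) > a} measurable. *)

Lemma exists_natSinv_lt (R : archiRealFieldType) (e : R) :
  0 < e -> exists n : nat, n.+1%:R^-1 < e.
Proof.
move=> e0; have [N _ hN] := near_infty_natSinv_lt (PosNum e0).
by exists N; exact: hN (leqnn N).
Qed.

Lemma proper_ideal_avoid (I : set (set nat)) (A : set nat) :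
  is_ideal I -> ~ I setT -> I A -> exists n, ~ A n.
Proof.
case=> _ _ Isub IN IA; apply: contrapT => /forallNP allA; apply: IN.
by apply: Isub _ _ _ IA => n _; apply: contrapT; exact: allA.
Qed.

Section Metric.
Variables (R : realType) (U : Type) (d : U -> U -> R).
Hypothesis hd : is_metric d.

Lemma dist_sym x y : d x y = d y x.
Proof. by case: hd. Qed.

Lemma dist_triangle x y z : d x z <= d x y + d y z.
Proof. by case: hd. Qed.

Lemma metric_open_dist_lt z c : metric_open d [set u | d u z < c].
Proof.
move=> x /= hx; exists (c - d x z); first by rewrite subr_gt0.
by move=> y /= hy; have := dist_triangle y x z; rewrite (dist_sym y x); lra.
Qed.

Lemma metric_open_dist_gt z c : metric_open d [set u | c < d u z].
Proof.
move=> x /= hx; exists (d x z - c); first by rewrite subr_gt0.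
by move=> y /= hy; have := dist_triangle x y z; lra.
Qed.

Lemma dist_gt_dense (D : set U) :
    (forall x e, 0 < e -> exists2 z, D z & d x z < e) ->
  forall a x y, a < d x y <->
    exists2 z, D z & exists n : nat, d x z < n.+1%:R^-1 /\ a + n.+1%:R^-1 < d y z.
Proof.
move=> Ddense a x y; split.
- move=> axy; have [|n hn] := @exists_natSinv_lt R ((d x y - a) / 2); first lra.
  have [|z Dz xz] := Ddense x n.+1%:R^-1; first by rewrite invr_gt0 ltr0n.
  exists z => //; exists n; split => //; move: n.+1%:R^-1 hn xz => t hn xz.
  by have := dist_triangle x z y; rewrite (dist_sym z y); lra.
- case=> z _ [n []]; move: n.+1%:R^-1 => t xz yz.
  by have := dist_triangle y x z; rewrite (dist_sym y x); lra.
Qed.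

End Metric.

Section Measurability.
Variables (dS : measure_display) (S : measurableType dS) (R : realType).
Variables (U : Type) (d : U -> U -> R).
Hypotheses (hd : is_metric d) (hsep : metric_separable d).
Variables (X Y : S -> U).
Hypotheses (hX : random_var d X) (hY : random_var d Y).

Lemma random_var_preimage_open (Z : S -> U) B :
  random_var d Z -> metric_open d B -> measurable (Z @^-1` B).
Proof. by move=> hZ hB; apply: hZ; exact: sub_gen_smallest. Qed.

Lemma measurable_dist_gt a : measurable [set s | a < d (X s) (Y s)].
Proof.
have [D [cD Ddense]] := hsep.
have -> : [set s | a < d (X s) (Y s)] = \bigcup_(z in D) \bigcup_n
    (X @^-1` [set u | d u z < n.+1%:R^-1] `&`
     Y @^-1` [set u | a + n.+1%:R^-1 < d u z]).
  apply/seteqP; split => s /=.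
  - by move/(dist_gt_dense hd Ddense) => [z Dz [n hn]]; exists z => //; exists n.
  - by move=> [z Dz [n _ hn]]; apply/(dist_gt_dense hd Ddense); exists z => //; exists n.
rewrite bigcup_set_type; apply: countable_bigcupT_measurable.
  by rewrite (eq_countable (card_setT D)).
move=> z; apply: bigcupT_measurable => n; apply: measurableI.
- exact/(random_var_preimage_open hX)/metric_open_dist_lt.
- exact/(random_var_preimage_open hY)/metric_open_dist_gt.
Qed.

Lemma measurable_dist_ge a : measurable [set s | a <= d (X s) (Y s)].
Proof.
have -> : [set s | a <= d (X s) (Y s)] =
    \bigcap_n [set s | a - n.+1%:R^-1 < d (X s) (Y s)].
  apply/seteqP; split => s /=.
  - move=> axy n _ /=; have : 0 < n.+1%:R^-1 :> R by rewrite invr_gt0 ltr0n.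
    by move: n.+1%:R^-1 => t; lra.
  - move=> hs; rewrite leNgt; apply/negP => xya.
    have [|n hn] := @exists_natSinv_lt R (a - d (X s) (Y s)); first lra.
    by have /= := hs n I; move: n.+1%:R^-1 hn => t; lra.
by apply: bigcapT_measurable => n; exact: measurable_dist_gt.
Qed.

End Measurability.

Section MeasureTriangle.
Variables (dS : measure_display) (S : measurableType dS) (R : realType).
Variables (mu : {measure set S -> \bar R}) (U : Type) (d : U -> U -> R).
Hypotheses (hd : is_metric d) (hsep : metric_separable d).

Lemma measure_dist_gt_triangle (X Y Z : S -> U) (a b : R) :
    random_var d X -> random_var d Y -> random_var d Z ->
  (mu [set s | (a + b < d (X s) (Z s))%R] <=
   mu [set s | (a < d (X s) (Y s))%R] + mu [set s | (b < d (Y s) (Z s))%R])%E.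
Proof.
move=> hX hY hZ.
have mXY := measurable_dist_gt hd hsep hX hY.
have mYZ := measurable_dist_gt hd hsep hY hZ.
apply: le_trans (measureU2 _ (mXY a) (mYZ b)).
apply: le_measure; rewrite ?inE; [exact: measurable_dist_gt|exact: measurableU|].
move=> s /= abxz; have := dist_triangle hd (X s) (Y s) (Z s).
by case: (ltP a (d (X s) (Y s))) => ?; [left|right; lra].
Qed.

End MeasureTriangle.

Lemma ky_fan_le (dS : measure_display) (S : measurableType dS) (R : realType)
    (P : probability S R) (U : Type) (d : U -> U -> R) (X Y : S -> U) (r : R) :
    0 <= r -> (forall e, r < e -> (P [set s | (e < d (X s) (Y s))%R] <= e%:E)%E) ->
  ky_fan P d X Y <= r.
Proof.
move=> r0 hP; apply/ler_addgt0Pr => e e0; apply: ge_inf.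
  by exists 0 => x [/ltW].
by split; [lra|apply: hP; lra].
Qed.

Section RoughLimits.
Variables (dS : measure_display) (S : measurableType dS) (R : realType).
Variables (P : probability S R) (U : Type) (d : U -> U -> R).
Hypotheses (hd : is_metric d) (hsep : metric_separable d).
Variables (I : set (set nat)) (Xn : nat -> S -> U) (Xs : S -> U).
Hypotheses (hI : is_ideal I) (hXn : forall n, random_var d (Xn n)).
Hypotheses (hXs : random_var d Xs) (hconv : I_conv_prob P d I Xn Xs).

Lemma rough_I_conv_prob_of_dist_ge_null (r : R) (Y : S -> U) :
    random_var d Y -> P [set s | r <= d (Xs s) (Y s)] = 0%E ->
  rough_I_conv_prob P d I r Xn Y.
Proof.
move=> hY null_ge eps delta eps0 delta0; case: hI => _ _ Isub.
apply: Isub _ _ _ (hconv eps0 delta0) => n /= hn; apply: lt_le_trans hn _.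
rewrite addrC; apply: le_trans (measure_dist_gt_triangle P hd hsep _ _ (hXn n) hXs hY) _.
rewrite -[leRHS]adde0 leeD2l // -null_ge le_measure ?inE //.
- exact: measurable_dist_gt.
- exact: measurable_dist_ge.
- by move=> s /= /ltW.
Qed.

Lemma ky_fan_le_of_rough_I_conv_prob (r : R) (Y : S -> U) :
    ~ I setT -> 0 <= r -> random_var d Y -> rough_I_conv_prob P d I r Xn Y ->
  ky_fan P d Xs Y <= r.
Proof.
move=> IN r0 hY hYconv; apply: ky_fan_le => // e re.
have [h [h0 eh]] : exists h : R, 0 < h /\ e = h + (r + h).
  by exists ((e - r) / 2); split; lra.
have e20 : 0 < e / 2 by lra.
case: (hI) => _ IU _.
have [n /not_orP [/negP nY /negP nX]] :=
  proper_ideal_avoid hI IN (IU _ _ (hYconv _ _ h0 e20) (hconv h0 e20)).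
rewrite -leNgt in nY; rewrite -leNgt in nX.
rewrite {1}eh; apply: le_trans (measure_dist_gt_triangle P hd hsep _ _ hXs (hXn n) hY) _.
rewrite (_ : [set s | h < d (Xs s) (Xn n s)] = [set s | h < d (Xn n s) (Xs s)]).
  by apply: le_trans (leeD nX nY) _; rewrite -EFinD lee_fin; lra.
by apply/seteqP; split => s /=; rewrite dist_sym.
Qed.

End RoughLimits.

Theorem theorem2p3 (dS : measure_display) (S : measurableType dS) (R : realType)
  (P : probability S R) (U : Type) (d : U -> U -> R)
  (hd : is_metric d) (hsep : metric_separable d)
  (I : set (set nat)) (hI : is_ideal I) (hIN : ~ I setT)
  (Xn : nat -> S -> U) (Xs : S -> U)
  (hXn : forall n, random_var d (Xn n)) (hXs : random_var d Xs)
  (hconv : I_conv_prob P d I Xn Xs) :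
  forall r : R, 0 <= r ->
    theta_bar P d r Xs `<=` rough_I_lim_set P d I r Xn /\
    rough_I_lim_set P d I r Xn `<=` ky_fan_closed_ball P d r Xs.
Proof.
move=> r r0; split.
- move=> Y [hY null_ge]; split => //.
  exact: (rough_I_conv_prob_of_dist_ge_null hd hsep hI hXn hXs hconv hY null_ge).
- move=> Y [hY hYconv]; split => //.
  exact: (ky_fan_le_of_rough_I_conv_prob hd hsep hI hXn hXs hconv hIN r0 hY hYconv).
Qed.
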